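(* Let $\delta\in(0,1)$, let $\varepsilon\in\{\pm1\}^n$ have independent Rademacher entries, and let $e_j$ be the $j$-th canonical basis vector of $\mathbb{R}^n$. Then $$\mathbb{P}\Big\{\max_{j=1,\dots,n}\|e_j^\top W\,\mathrm{diag}(\varepsilon)\,U\bar D\|_2\geqslant\sqrt{\tfrac{d_e}{n}}+\sqrt{\tfrac{8\log(n/\delta)}{n}}\Big\}\leqslant\delta .$$
   Context: Let $A\in\mathbb{R}^{n\times d}$, $A\neq0$, with $n\geqslant d$ and $n$ a power of $2$, $\Lambda\in\mathbb{R}^{d\times d}$ diagonal with $\Lambda\succeq I_d$, $\nu>0$. Let $A(A^\top A+\nu^2\Lambda)^{-1/2}=UDV^\top$ be a thin SVD ($U\in\mathbb{R}^{n\times d}$ with orthonormal columns, $D$ diagonal nonnegative), $\bar D=D/\|D\|_2$, and $d_e=\|D\|_F^2/\|D\|_2^2$. $W\in\mathbb{R}^{n\times n}$ is the normalized (orthonormal) Walsh–Hadamard matrix, whose entries all have magnitude $n^{-1/2}$. *)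

From HB Require Import structures.
From mathcomp Require Import all_boot all_order all_algebra.
From mathcomp Require Import all_classical all_reals.
From mathcomp Require Import exp.
Set Implicit Arguments. Unset Strict Implicit. Unset Printing Implicit Defensive.
Import Order.TTheory GRing.Theory Num.Theory.
Local Open Scope ring_scope.

Section Defs.
Variable R : realType.

Definition cnorm m (x : 'cV[R]_m) : R := Num.sqrt (\sum_i x i 0 ^+ 2).
Definition rnorm m (x : 'rV[R]_m) : R := Num.sqrt (\sum_i x 0 i ^+ 2).

Definition frob m p (M : 'M[R]_(m, p)) : R :=
  Num.sqrt (\sum_i \sum_j M i j ^+ 2).

Definition opnorm m p (M : 'M[R]_(m, p)) : R :=
  sup [set r : R | exists x : 'cV[R]_p, cnorm x = 1 /\ r = cnorm (M *m x)].

Definition posdef m (S : 'M[R]_m) : Prop :=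
  S^T = S /\ forall x : 'cV[R]_m, x != 0 -> 0 < (x^T *m S *m x) 0 0.

(* S is the (principal) inverse square root M^{-1/2} of M:
   S symmetric positive definite and S * S * M = I *)
Definition is_inv_sqrt m (M S : 'M[R]_m) : Prop :=
  posdef S /\ S *m S *m M = 1%:M.

(* normalized Walsh-Hadamard (Sylvester) matrix of size 2^k:
   W i j = (-1)^{<bits i, bits j>} / sqrt(2^k) *)
Definition walsh_hadamard (k : nat) : 'M[R]_(2 ^ k) :=
  \matrix_(i, j) ((-1) ^+ (\sum_(b < k) (odd (i %/ 2 ^ b) && odd (j %/ 2 ^ b)))
                   / Num.sqrt (2 ^ k)%:R).

Definition radvec m (e : {ffun 'I_m -> bool}) : 'rV[R]_m :=
  \row_i (if e i then 1 else -1).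

(* probability of an event under independent Rademacher signs (uniform on {+-1}^m) *)
Definition radprob m (E : {ffun 'I_m -> bool} -> bool) : R :=
  #|[set e | E e]|%:R / (2 ^ m)%:R.

End Defs.

From HB Require Import structures.
From mathcomp Require Import all_boot all_order all_algebra.
From mathcomp Require Import all_classical all_reals.
From mathcomp Require Import exp sequences.
From mathcomp Require Import ring lra.
Set Implicit Arguments. Unset Strict Implicit. Unset Printing Implicit Defensive.
Import Order.TTheory GRing.Theory Num.Theory.
Local Open Scope ring_scope.

(* Fix a row j.  Since sqrt n W_ji = +-1, row j of W diag(eps) U Dbar equals
   n^-1/2 sum_i eps_i w_i with w_i = sqrt n W_ji (row i of U Dbar)^T, and as U has
   orthonormal columns and 0 <= Dbar <= I, these vectors satisfy
   sum_i <w_i, y>^2 <= |y|^2 and sum_i |w_i|^2 = d_e.  For such vectors and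
   0 <= lam < 1/7,
       E exp (lam |sum_i eps_i w_i|^2) <= exp (lam / (1 - 7 lam) * sum_i |w_i|^2).
   This is proved by averaging out one sign at a time: pairing eps_i = +-1 and
   cosh x <= exp (7/4 x^2) turns the quadratic form G of the remaining sum into
   G + 7 lam (G w_i) (G w_i)^T at the price exp (lam w_i^T G w_i), and the price is
   at most exp (lam |w_i|^2 / (1 - 7 lam)) because G stays below the inverse of
   (1 - 7 lam) I + 7 lam sum_(j >= i) w_j w_j^T.  A Chernoff bound with
   lam = t / (7 sqrt d_e + 8 t) then gives P (|sum_i eps_i w_i| >= sqrt d_e + t)
   <= exp (- t^2 / 8); for t = sqrt (8 log (n / delta)) this is delta / n, and a
   union bound over the n rows concludes. *)

Section QuadraticForms.
Variables (R : realFieldType) (d : nat).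
Implicit Types (G K : 'M[R]_d) (x y z u : 'cV[R]_d).

Definition vdot x y : R := (x^T *m y) 0 0.
Definition qform G x y : R := (x^T *m G *m y) 0 0.

Lemma vdotE x y : vdot x y = \sum_i x i 0 * y i 0.
Proof. by rewrite /vdot mxE; apply: eq_bigr => i _; rewrite mxE. Qed.

Lemma qform1 x y : qform 1%:M x y = vdot x y.
Proof. by rewrite /qform mulmx1. Qed.

Lemma vdotC x y : vdot x y = vdot y x.
Proof. by rewrite /vdot -[in RHS](trmxK x) -trmx_mul [RHS]mxE. Qed.

Lemma vdot_ge0 x : 0 <= vdot x x.
Proof. by rewrite /vdot mxE sumr_ge0 // => i _; rewrite mxE -expr2 sqr_ge0. Qed.

Lemma vdot_mulmxr G x y : vdot x (G *m y) = qform G x y.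
Proof. by rewrite /vdot /qform mulmxA. Qed.

Lemma qformDl G x y z : qform G (x + y) z = qform G x z + qform G y z.
Proof. by rewrite /qform linearD !mulmxDl mxE. Qed.

Lemma qformZl G a x z : qform G (a *: x) z = a * qform G x z.
Proof. by rewrite /qform linearZ -!scalemxAl mxE. Qed.

Lemma qformDr G x y z : qform G x (y + z) = qform G x y + qform G x z.
Proof. by rewrite /qform mulmxDr mxE. Qed.

Lemma qformZr G a x z : qform G x (a *: z) = a * qform G x z.
Proof. by rewrite /qform -scalemxAr mxE. Qed.

Lemma qformDm G K x y : qform (G + K) x y = qform G x y + qform K x y.
Proof. by rewrite /qform mulmxDr mulmxDl mxE. Qed.

Lemma qformBm G K x y : qform (G - K) x y = qform G x y - qform K x y.
Proof. by rewrite /qform mulmxBr mulmxBl !mxE. Qed.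

Lemma qformZm G a x y : qform (a *: G) x y = a * qform G x y.
Proof. by rewrite /qform -scalemxAr -scalemxAl mxE. Qed.

Lemma qform0l G y : qform G 0 y = 0.
Proof. by rewrite /qform trmx0 !mul0mx mxE. Qed.

Lemma qformC G x y : G^T = G -> qform G x y = qform G y x.
Proof.
move=> GT; rewrite /qform; have -> : y^T *m G *m x = (x^T *m G *m y)^T.
  by rewrite !trmx_mul trmxK GT mulmxA.
by rewrite [RHS]mxE.
Qed.

Lemma qform_outer u x y : qform (u *m u^T) x y = vdot x u * vdot u y.
Proof.
rewrite /qform /vdot !mulmxA [x^T *m u]mx11_scalar.
by rewrite mul_scalar_mx -scalemxAl !mxE eqxx mulr1n.
Qed.

End QuadraticForms.

Section MatrixNorms.
Variable R : realType.

Lemma walsh_hadamard_sqr k i j : walsh_hadamard R k i j ^+ 2 = (2 ^ k)%:R^-1.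
Proof.
rewrite mxE exprMn -exprM mulnC exprM sqrrN !expr1n mul1r exprVn.
by rewrite sqr_sqrtr ?ler0n.
Qed.

Lemma vdot_mul_orthonormal m d (U : 'M[R]_(m, d)) x :
  U^T *m U = 1%:M -> vdot (U *m x) (U *m x) = vdot x x.
Proof. by move=> UU; rewrite /vdot trmx_mul -mulmxA (mulmxA U^T) UU mul1mx. Qed.

Lemma vdot_diag_mx_le d (v : 'rV[R]_d) y : (forall c, v 0 c ^+ 2 <= 1) ->
  vdot (diag_mx v *m y) (diag_mx v *m y) <= vdot y y.
Proof.
move=> v_le1; rewrite !vdotE; apply: ler_sum => c _.
by rewrite mul_diag_mx !mxE -!expr2 exprMn ler_piMl ?sqr_ge0.
Qed.

Lemma frob_ge0 m p (X : 'M[R]_(m, p)) : 0 <= frob X.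
Proof. exact: sqrtr_ge0. Qed.

Lemma frob_sqr_tr m p (X : 'M[R]_(m, p)) : frob X ^+ 2 = \tr (X^T *m X).
Proof.
rewrite sqr_sqrtr; last by do 2![apply: sumr_ge0 => ? _]; apply: sqr_ge0.
rewrite exchange_big; apply: eq_bigr => c _; rewrite mxE.
by apply: eq_bigr => i _; rewrite mxE expr2.
Qed.

Lemma frob_mul_orthonormal m d p (U : 'M[R]_(m, d)) (X : 'M[R]_(d, p)) :
  U^T *m U = 1%:M -> frob (U *m X) ^+ 2 = frob X ^+ 2.
Proof.
by move=> UU; rewrite !frob_sqr_tr trmx_mul -mulmxA (mulmxA U^T) UU mul1mx.
Qed.

Lemma frobZ m p (a : R) (X : 'M[R]_(m, p)) : frob (a *: X) ^+ 2 = a ^+ 2 * frob X ^+ 2.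
Proof.
rewrite !frob_sqr_tr -scalemxAr [(a *: X)^T]linearZ /= -scalemxAl scalerA.
by rewrite mxtraceZ expr2.
Qed.

Lemma opnorm_diag_mx_ge d (v : 'rV[R]_d) c :
  0 <= v 0 c -> v 0 c <= opnorm (diag_mx v).
Proof.
have cnorm_delta (a : R) : cnorm (a *: delta_mx c 0) = `|a|.
  rewrite /cnorm (bigD1 c) //= big1 => [|i /negbTE ic]; last first.
    by rewrite !mxE ic mulr0 expr0n.
  by rewrite !mxE !eqxx mulr1 addr0 sqrtr_sqr.
move=> v_ge0; apply: ub_le_sup.
- exists (Num.sqrt (\sum_i v 0 i ^+ 2)) => _ [x [x1 ->]].
  have x_sqr_le i : x i 0 ^+ 2 <= 1.
    rewrite -(expr1n _ 2) -x1 sqr_sqrtr ?sumr_ge0 // => [|k _]; last exact: sqr_ge0.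
    by rewrite (bigD1 i) //= lerDl sumr_ge0 // => k _; apply: sqr_ge0.
  rewrite ler_sqrt ?sumr_ge0 // => [|i _]; last exact: sqr_ge0.
  apply: ler_sum => i _; rewrite mul_diag_mx mxE exprMn.
  by rewrite ler_piMr ?sqr_ge0.
- exists (delta_mx c 0); split.
    by rewrite -[delta_mx c 0]scale1r cnorm_delta normr1.
  have -> : diag_mx v *m delta_mx c 0 = v 0 c *: (delta_mx c 0 : 'cV_d).
    apply/matrixP => i k; rewrite mul_diag_mx !mxE.
    by case: eqP => [->|] //=; rewrite !mulr0.
  by rewrite cnorm_delta ger0_norm.
Qed.

Lemma vdot_normalized_diag_le d (v : 'rV[R]_d) y : (forall c, 0 <= v 0 c) ->
  vdot ((opnorm (diag_mx v))^-1 *: diag_mx v *m y)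
       ((opnorm (diag_mx v))^-1 *: diag_mx v *m y) <= vdot y y.
Proof.
move=> v_ge0; rewrite -linearZ; apply: vdot_diag_mx_le => c.
have v_le := opnorm_diag_mx_ge (v_ge0 c); set op := opnorm _ in v_le *.
rewrite mxE; have [->|op_neq0] := eqVneq op 0; first by rewrite invr0 mul0r expr0n.
have op_gt0 : 0 < op by rewrite lt_def op_neq0 (le_trans (v_ge0 c)).
rewrite expr_le1 // ?mulr_ge0 ?invr_ge0 ?v_ge0 ?(ltW op_gt0) //.
by rewrite mulrC ler_pdivrMr // mul1r.
Qed.

End MatrixNorms.

Lemma sqrtr_sqr_div (R : rcfType) (a c : R) :
  0 <= a -> 0 <= c -> Num.sqrt (a ^+ 2 / c) = a / Num.sqrt c.
Proof.
by move=> a_ge0 c_ge0; rewrite sqrtrM ?sqr_ge0 // sqrtr_sqr ger0_norm // sqrtrV.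
Qed.

Lemma cosh_le_expR (R : realType) (x : R) :
  expR x + expR (- x) <= 2 * expR (7/4 * x ^+ 2).
Proof.
wlog x_ge0 : x / 0 <= x => [hwlog|].
  have [/hwlog//|x_lt0] := leP 0 x.
  by have := hwlog (- x); rewrite opprK sqrrN addrC; apply; rewrite oppr_ge0 ltW.
(* For x < 4/7, e^x (1 - x) <= 1 and e^-x (1 + x) <= 1; beyond, x <= 7/4 x^2. *)
have expRN_expR := expRxMexpNx_1 x.
have [x_small|x_large] := ltP x (4/7).
- have expRN_ge := expR_ge1Dx (- x).
  have expR_ge := expR_ge1Dx x.
  have expR_sqr_ge := expR_ge1Dx (7/4 * x ^+ 2).
  have expR_pos := expR_gt0 x; have expRN_pos := expR_gt0 (- x).
  have expR_le : expR x * (1 - x) <= 1.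
    by rewrite -[X in _ <= X]expRN_expR ler_pM2l //; lra.
  have expRN_le : expR (- x) * (1 + x) <= 1.
    by rewrite -[X in _ <= X]expRN_expR [X in _ <= X]mulrC ler_pM2l.
  nra.
- have : expR (- x) <= expR x by rewrite ler_expR; lra.
  have : expR x <= expR (7/4 * x ^+ 2) by rewrite ler_expR; nra.
  lra.
Qed.

Section SignAverages.
Variables (R : realType) (n : nat).
Implicit Types (e : {ffun 'I_n -> bool}) (f g : {ffun 'I_n -> bool} -> R).

Definition radmean f : R := (\sum_e f e) / (2 ^ n)%:R.

Lemma radmean_cst c : radmean (fun=> c) = c.
Proof.
rewrite /radmean sumr_const card_ffun card_bool card_ord -[_ *+ _]mulr_natr.
by rewrite mulfK // pnatr_eq0 -lt0n expn_gt0.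
Qed.

Lemma eq_radmean f g : f =1 g -> radmean f = radmean g.
Proof. by move=> fg; congr (_ / _); apply: eq_bigr => e _. Qed.

Lemma ler_radmean f g : (forall e, f e <= g e) -> radmean f <= radmean g.
Proof. by move=> fg; rewrite ler_pM2r ?invr_gt0 ?ltr0n ?expn_gt0 // ler_sum. Qed.

Lemma radmeanZ c f : radmean (fun e => c * f e) = c * radmean f.
Proof. by rewrite /radmean -mulr_sumr mulrA. Qed.

Lemma radmean_sum (I : finType) (F : I -> {ffun 'I_n -> bool} -> R) :
  radmean (fun e => \sum_i F i e) = \sum_i radmean (F i).
Proof. by rewrite /radmean exchange_big mulr_suml. Qed.

Lemma radprobE (E : {ffun 'I_n -> bool} -> bool) :
  radprob R E = radmean (fun e => (E e)%:R).
Proof.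
rewrite /radprob /radmean -sum1_card natr_sum big_mkcond /=.
by congr (_ / _); apply: eq_bigr => e _; rewrite inE; case: (E e).
Qed.

Definition toggle (i : 'I_n) e : {ffun 'I_n -> bool} :=
  [ffun j => if j == i then ~~ e j else e j].

Lemma toggleK i : involutive (toggle i).
Proof. by move=> e; apply/ffunP => j; rewrite !ffunE; case: eqP; rewrite ?negbK. Qed.

Lemma toggle_neq i j e : j != i -> toggle i e j = e j.
Proof. by rewrite ffunE => /negbTE ->. Qed.

Lemma radvec_toggle i e : radvec R (toggle i e) 0 i = - radvec R e 0 i.
Proof. by rewrite !mxE ffunE eqxx; case: (e i); rewrite ?opprK. Qed.

Lemma radvec_sqr e i : radvec R e 0 i ^+ 2 = 1.
Proof. by rewrite mxE; case: (e i); rewrite ?sqrrN expr1n. Qed.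

Lemma radmean_toggle i f : radmean f = radmean (fun e => (f e + f (toggle i e)) / 2).
Proof.
rewrite /radmean -mulr_suml big_split /=.
have -> : \sum_e f (toggle i e) = \sum_e f e.
  by rewrite [RHS](reindex_inj (inv_inj (toggleK i))).
by rewrite -mulr2n -[_ *+ 2]mulr_natr mulfK ?pnatr_eq0.
Qed.

End SignAverages.

Lemma big_ord_geq_recl (V : nmodType) n (i : 'I_n) (F : 'I_n -> V) :
  \sum_(j < n | (i <= j)%N) F j = F i + \sum_(j < n | (i < j)%N) F j.
Proof.
rewrite (bigD1 i) //=; congr (_ + _); apply: eq_bigl => j.
by rewrite ltn_neqAle andbC eq_sym.
Qed.

Lemma big_ord_geq_pred0 (V : nmodType) n m (F : 'I_n -> V) :
  (n <= m)%N -> \sum_(j < n | (m <= j)%N) F j = 0.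
Proof.
move=> le_nm; rewrite big_pred0 // => j; apply/negbTE; rewrite -ltnNge.
exact: leq_trans (ltn_ord j) le_nm.
Qed.

Section RademacherMGF.
Variables (R : realType) (d n : nat) (w : 'I_n -> 'cV[R]_d) (lam : R).
Hypotheses (lam_ge0 : 0 <= lam) (lam_lt : 7 * lam < 1).
Local Notation mu := (7 * lam).
Implicit Types (G K : 'M[R]_d) (x y : 'cV[R]_d) (e : {ffun 'I_n -> bool}).

Definition radsum_from m e : 'cV[R]_d :=
  \sum_(i < n | (m <= i)%N) radvec R e 0 i *: w i.
Definition energy_from m y : R := \sum_(i < n | (m <= i)%N) vdot (w i) y ^+ 2.

(* K dominates (1 - mu) I + mu sum_(i >= m) w_i w_i^T, and G stays below K^-1
   without inverting K: the third clause says G K G <= G. *)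
Definition admissible m G K : Prop :=
  [/\ G^T = G, forall x, 0 <= qform G x x,
      forall x, qform K (G *m x) (G *m x) <= qform G x x &
      forall y, (1 - mu) * vdot y y + mu * energy_from m y <= qform K y y].

Lemma energy_from_ge0 m y : 0 <= energy_from m y.
Proof. by apply: sumr_ge0 => i _; apply: sqr_ge0. Qed.

Lemma admissible0 :
  (forall y, energy_from 0 y <= vdot y y) -> admissible 0 1%:M 1%:M.
Proof.
move=> bessel; split=> [|x|x|y]; rewrite ?trmx1 ?mul1mx ?qform1 ?vdot_ge0 //.
have : 0 <= lam * (vdot y y - energy_from 0 y) by rewrite mulr_ge0 ?subr_ge0.
lra.
Qed.

Lemma admissible_qform_le (i : 'I_n) G K :
  admissible i G K -> qform G (w i) (w i) <= vdot (w i) (w i) / (1 - mu).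
Proof.
case=> _ _ GKG_le K_ge; set u := G *m w i; set b := qform G (w i) (w i).
have mu_lt1 : 0 < 1 - mu by rewrite subr_gt0.
have u_le : (1 - mu) * vdot u u <= b.
  apply: le_trans (GKG_le (w i)); have := K_ge u.
  have : 0 <= mu * energy_from i u by rewrite !mulr_ge0 ?energy_from_ge0.
  lra.
have b_vdot : b = vdot (w i) u by rewrite vdot_mulmxr.
(* Cauchy-Schwarz: expand 0 <= |s w_i - G w_i|^2 with s = 1/(1 - mu). *)
set s := (1 - mu)^-1.
have s_gt0 : 0 < s by rewrite invr_gt0.
have s_mu : s * (1 - mu) = 1 by rewrite mulVf // gt_eqF.
have := vdot_ge0 (s *: w i - u).
rewrite -scaleN1r -qform1 !(qformDl, qformDr, qformZl, qformZr) !qform1.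
rewrite (vdotC u) -b_vdot.
have su_le : vdot u u <= s * b.
  by have := ler_wpM2l (ltW s_gt0) u_le; rewrite mulrA s_mu mul1r.
move=> dist_ge0; rewrite -subr_ge0 -(pmulr_rge0 _ s_gt0); nra.
Qed.

Lemma energy_fromS (i : 'I_n) y :
  energy_from i.+1 y = energy_from i y - vdot (w i) y ^+ 2.
Proof. by rewrite /energy_from big_ord_geq_recl addrAC subrr add0r. Qed.

Lemma admissible_step (i : 'I_n) G K : admissible i G K ->
  admissible i.+1 (G + mu *: ((G *m w i) *m (G *m w i)^T))
                  (K - mu *: (w i *m (w i)^T)).
Proof.
case=> GT G_ge0 GKG_le K_ge; set u := G *m w i; set b := qform G (w i) (w i).
have mu_ge0 : 0 <= mu by rewrite mulr_ge0.
have b_ge0 : 0 <= b := G_ge0 (w i).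
split=> [|x|x|y].
- by rewrite linearD linearZ /= trmx_mul trmxK GT.
- rewrite qformDm qformZm qform_outer vdotC -expr2.
  exact: addr_ge0 (G_ge0 x) (mulr_ge0 mu_ge0 (sqr_ge0 _)).
- (* The new G maps x to G (x + mu a w_i); the claim reduces to
     0 <= mu^2 a^2 b (1 + mu b). *)
  set a := qform G (w i) x.
  have ua : vdot u x = a by rewrite vdotC vdot_mulmxr qformC.
  have -> : (G + mu *: (u *m u^T)) *m x = G *m (x + (mu * a) *: w i).
    rewrite mulmxDl -scalemxAl -mulmxA [u^T *m x]mx11_scalar mul_mx_scalar.
    by rewrite -/(vdot u x) ua scalerA mulmxDr -scalemxAr.
  set z := x + _.
  rewrite qformBm qformZm qform_outer (vdotC (G *m z)) vdot_mulmxr.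
  rewrite qformDm qformZm qform_outer (vdotC x) ua.
  have := GKG_le z.
  rewrite /z !(qformDl, qformDr, qformZl, qformZr) (qformC x) // -/a -/b.
  have mub_ge0 : 0 <= mu * b := mulr_ge0 mu_ge0 b_ge0.
  have := mulr_ge0 (mulr_ge0 (mulr_ge0 mu_ge0 (sqr_ge0 a)) mub_ge0)
                   (addr_ge0 ler01 mub_ge0).
  nra.
- rewrite qformBm qformZm qform_outer energy_fromS.
  by have := K_ge y; rewrite (vdotC y); lra.
Qed.

Lemma expR_qform_sign_pair_le G x r s : G^T = G -> s ^+ 2 = 1 ->
  expR (lam * qform G (s *: x + r) (s *: x + r))
  + expR (lam * qform G (- s *: x + r) (- s *: x + r))
  <= 2 * (expR (lam * qform G x x)
          * expR (lam * qform (G + mu *: ((G *m x) *m (G *m x)^T)) r r)).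
Proof.
move=> GT s2.
have qformE t : qform G (t *: x + r) (t *: x + r)
    = t ^+ 2 * qform G x x + qform G r r + 2 * t * qform G r x.
  by rewrite !(qformDl, qformDr, qformZl, qformZr) (qformC x r GT); ring.
rewrite !qformE sqrrN s2 qformDm qformZm qform_outer (vdotC (G *m x)) !vdot_mulmxr.
set a := qform G r x; set b := qform G x x; set q := qform G r r.
have -> : lam * (1 * b + q + 2 * s * a) = lam * b + lam * q + 2 * lam * s * a by ring.
have -> : lam * (1 * b + q + 2 * - s * a) = lam * b + lam * q - 2 * lam * s * a
  by ring.
have -> : lam * (q + mu * (a * a)) = lam * q + 7/4 * (2 * lam * s * a) ^+ 2.
  by rewrite !exprMn s2; field.
rewrite !expRD -mulrDr.
apply: le_trans (ler_wpM2l (mulr_ge0 (expR_ge0 _) (expR_ge0 _)) (cosh_le_expR _)) _.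
lra.
Qed.

Lemma radsum_fromS (i : 'I_n) e :
  radsum_from i e = radvec R e 0 i *: w i + radsum_from i.+1 e.
Proof. exact: big_ord_geq_recl. Qed.

Lemma radsum_from_toggle (i : 'I_n) e :
  radsum_from i.+1 (toggle i e) = radsum_from i.+1 e.
Proof.
apply: eq_bigr => j lt_ij; rewrite !mxE toggle_neq //.
by apply: contraTneq lt_ij => ->; rewrite ltnn.
Qed.

Lemma radmean_expR_qform_le m G K : admissible m G K ->
  radmean (fun e => expR (lam * qform G (radsum_from m e) (radsum_from m e)))
  <= expR (lam / (1 - mu) * \sum_(i < n | (m <= i)%N) vdot (w i) (w i)).
Proof.
have [k] := ubnP (n - m); elim: k m G K => // k IH m G K lt_nm_k adm.
have [le_nm|lt_mn] := leqP n m.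
  have radsum0 e : radsum_from m e = 0 := big_ord_geq_pred0 _ le_nm.
  apply: (le_trans (ler_radmean (g := fun=> 1) _)) => [e|].
    by rewrite radsum0 qform0l mulr0 expR0.
  by rewrite radmean_cst big_ord_geq_pred0 // mulr0 expR0.
set i := Ordinal lt_mn; rewrite -[m]/(nat_of_ord i) in adm *.
have [GT _ _ _] := adm; have IH' := IH i.+1 _ _ _ (admissible_step adm).
rewrite -subnSK // ltnS in lt_nm_k.
rewrite (radmean_toggle i).
apply: le_trans (ler_radmean (g := fun e => expR (lam * qform G (w i) (w i)) *
    expR (lam * qform (G + mu *: ((G *m w i) *m (G *m w i)^T))
                      (radsum_from i.+1 e) (radsum_from i.+1 e))) _) _.
  move=> e; rewrite !radsum_fromS radsum_from_toggle radvec_toggle ler_pdivrMr //.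
  by rewrite [X in _ <= X]mulrC; apply: expR_qform_sign_pair_le GT (radvec_sqr _ _ _).
rewrite radmeanZ; apply: le_trans (ler_wpM2l (expR_ge0 _) (IH' lt_nm_k)) _.
rewrite -expRD ler_expR (big_ord_geq_recl i) mulrDr lerD2r mulrAC -mulrA.
by apply: ler_wpM2l => //; apply: admissible_qform_le adm.
Qed.

Definition radsum e : 'cV[R]_d := \sum_i radvec R e 0 i *: w i.

Lemma radmean_expR_radsum_le :
  (forall y, \sum_i vdot (w i) y ^+ 2 <= vdot y y) ->
  radmean (fun e => expR (lam * vdot (radsum e) (radsum e)))
  <= expR (lam / (1 - mu) * \sum_i vdot (w i) (w i)).
Proof.
move=> bessel; have := radmean_expR_qform_le (admissible0 bessel).
by under eq_radmean => e do rewrite qform1.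
Qed.

End RademacherMGF.

Lemma ler_radprob (R : realType) n (E1 E2 : {ffun 'I_n -> bool} -> bool) :
  (forall e, E1 e -> E2 e) -> radprob R E1 <= radprob R E2.
Proof.
move=> E12; rewrite !radprobE; apply: ler_radmean => e.
by case: (boolP (E1 e)) => [/E12 ->|_]; rewrite ?ler_nat.
Qed.

Lemma eq_radprob (R : realType) n (E1 E2 : {ffun 'I_n -> bool} -> bool) :
  E1 =1 E2 -> radprob R E1 = radprob R E2.
Proof. by move=> E12; rewrite !radprobE; apply: eq_radmean => e; rewrite E12. Qed.

Lemma radprob_bigmax_ge_le (R : realType) n m
    (f : 'I_m -> {ffun 'I_n -> bool} -> R) (thr : R) : 0 < thr ->
  radprob R (fun e => thr <= \big[Order.max/0]_(j < m) f j e)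
  <= \sum_j radprob R (fun e => thr <= f j e).
Proof.
move=> thr_gt0; under eq_bigr do rewrite radprobE.
rewrite radprobE -radmean_sum; apply: ler_radmean => e.
case: bigmax_geP => [[|[j _ le_thr_f]]|]; last by rewrite sumr_ge0.
- by rewrite leNgt thr_gt0.
- by rewrite (bigD1 j) //= le_thr_f lerDl sumr_ge0.
Qed.

Lemma chernoff_exponent_le (R : realFieldType) (F t : R)
    (lam := t / (7 * F + 8 * t)) : 0 <= F -> 0 < t ->
  lam / (1 - 7 * lam) * F ^+ 2 - lam * (F + t) ^+ 2 <= - (t ^+ 2 / 8).
Proof.
move=> F_ge0 t_gt0.
have den1_gt0 : 0 < 7 * F + 8 * t by lra.
have den2_gt0 : 0 < 7 * F + t by lra.
have -> : lam / (1 - 7 * lam) * F ^+ 2 - lam * (F + t) ^+ 2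
    = - (t ^+ 2 / 8) - t ^+ 2 * F * (7 * F + 9 * t)
                       / (8 * (7 * F + t) * (7 * F + 8 * t)).
  by rewrite /lam; field; rewrite (gt_eqF den1_gt0) (gt_eqF den2_gt0).
rewrite gerBl divr_ge0 // !mulr_ge0 ?sqr_ge0 //; lra.
Qed.

Lemma radprob_radsum_ge_le (R : realType) d n (w : 'I_n -> 'cV[R]_d) (t : R) :
  (forall y, \sum_i vdot (w i) y ^+ 2 <= vdot y y) -> 0 < t ->
  radprob R (fun e =>
    (Num.sqrt (\sum_i vdot (w i) (w i)) + t) ^+ 2 <= vdot (radsum w e) (radsum w e))
  <= expR (- (t ^+ 2 / 8)).
Proof.
move=> bessel t_gt0; set F := Num.sqrt _.
have F_ge0 : 0 <= F := sqrtr_ge0 _.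
have exponent_le := chernoff_exponent_le F_ge0 t_gt0.
set lam := t / (7 * F + 8 * t) in exponent_le *.
have den_gt0 : 0 < 7 * F + 8 * t by lra.
have lam_ge0 : 0 <= lam by rewrite /lam divr_ge0 ?ltW.
have lam_lt : 7 * lam < 1 by rewrite /lam mulrA ltr_pdivrMr // mul1r; lra.
rewrite radprobE; apply: le_trans (ler_radmean (g := fun e =>
  expR (- (lam * (F + t) ^+ 2)) * expR (lam * vdot (radsum w e) (radsum w e))) _) _.
  move=> e; rewrite -expRD.
  case: (boolP (_ ^+ 2 <= _)) => [tail|_] /=; last exact: expR_ge0.
  by rewrite -expR0 ler_expR addrC subr_ge0 ler_wpM2l.
rewrite radmeanZ; apply: le_trans (ler_wpM2l (expR_ge0 _)
  (radmean_expR_radsum_le lam_ge0 lam_lt bessel)) _.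
have -> : \sum_i vdot (w i) (w i) = F ^+ 2.
  by rewrite sqr_sqrtr // sumr_ge0 // => i _; apply: vdot_ge0.
by rewrite -expRD ler_expR addrC.
Qed.

Section SignedRows.
Variables (R : realType) (n d : nat) (H : 'M[R]_n) (M : 'M[R]_(n, d)) (j : 'I_n).
Hypothesis H_sqr : forall i k, H i k ^+ 2 = n%:R^-1.

Let n_gt0 : (0 < n)%N := leq_ltn_trans (leq0n j) (ltn_ord j).

Let sqrtn_gt0 : 0 < Num.sqrt (n%:R : R).
Proof. by rewrite sqrtr_gt0 ltr0n. Qed.

Definition row_weight i : 'cV[R]_d := (Num.sqrt n%:R * H j i) *: (row i M)^T.

Lemma row_weight_sign i : (Num.sqrt n%:R * H j i) ^+ 2 = 1.
Proof. by rewrite exprMn sqr_sqrtr ?ler0n // H_sqr mulfV // pnatr_eq0 -lt0n. Qed.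

Lemma rnorm_row_signed_mx e :
  rnorm (row j (H *m diag_mx (radvec R e) *m M))
  = Num.sqrt (vdot (radsum row_weight e) (radsum row_weight e)) / Num.sqrt n%:R.
Proof.
have entry c : row j (H *m diag_mx (radvec R e) *m M) 0 c
    = (Num.sqrt n%:R)^-1 * radsum row_weight e c 0.
  rewrite !mxE summxE mulr_sumr; apply: eq_bigr => i _.
  by rewrite mul_mx_diag !mxE; field; rewrite (gt_eqF sqrtn_gt0).
rewrite -sqrtrV ?ler0n // -sqrtrM ?vdot_ge0 //; congr Num.sqrt.
rewrite /vdot mxE mulr_suml; apply: eq_bigr => c _.
by rewrite entry exprMn exprVn sqr_sqrtr ?ler0n // mulrC expr2 mxE.
Qed.

Lemma row_weight_bessel y :
  \sum_i vdot (row_weight i) y ^+ 2 = vdot (M *m y) (M *m y).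
Proof.
rewrite [RHS]mxE; apply: eq_bigr => i _.
rewrite /vdot linearZ /= -scalemxAl trmxK -row_mul mxE exprMn row_weight_sign.
by rewrite mul1r !mxE expr2.
Qed.

Lemma row_weight_energy :
  Num.sqrt (\sum_i vdot (row_weight i) (row_weight i)) = frob M.
Proof.
congr Num.sqrt; apply: eq_bigr => i _.
rewrite /vdot /row_weight -scalemxAr linearZ /= trmxK -scalemxAl scalerA -expr2.
by rewrite row_weight_sign scale1r mxE; apply: eq_bigr => c _; rewrite !mxE expr2.
Qed.

Lemma radprob_row_signed_mx_ge_le t :
  (forall y, vdot (M *m y) (M *m y) <= vdot y y) -> 0 < t ->
  radprob R (fun e =>
    (frob M + t) / Num.sqrt n%:R <= rnorm (row j (H *m diag_mx (radvec R e) *m M)))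
  <= expR (- (t ^+ 2 / 8)).
Proof.
move=> contract t_gt0.
have bessel y : \sum_i vdot (row_weight i) y ^+ 2 <= vdot y y.
  by rewrite row_weight_bessel contract.
apply: le_trans (radprob_radsum_ge_le bessel t_gt0); apply: ler_radprob => e.
rewrite rnorm_row_signed_mx ler_pM2r ?invr_gt0 ?sqrtn_gt0 // row_weight_energy.
move=> le_thr.
rewrite -ler_sqrt ?vdot_ge0 // sqrtr_sqr ger0_norm //.
exact: addr_ge0 (frob_ge0 _) (ltW t_gt0).
Qed.

End SignedRows.

Theorem lemma7p1 (R : realType) (k d : nat)
  (A : 'M[R]_(2 ^ k, d)) (lam : 'rV[R]_d) (nu : R)
  (S : 'M[R]_d) (U : 'M[R]_(2 ^ k, d)) (Dv : 'rV[R]_d) (V : 'M[R]_d)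
  (delta : R) :
  (d <= 2 ^ k)%N ->
  A != 0 ->
  (forall i, 1 <= lam 0 i) ->
  0 < nu ->
  is_inv_sqrt (A^T *m A + nu ^+ 2 *: diag_mx lam) S ->
  U^T *m U = 1%:M ->
  V^T *m V = 1%:M ->
  (forall i, 0 <= Dv 0 i) ->
  A *m S = U *m diag_mx Dv *m V^T ->
  0 < delta < 1 ->
  let n := (2 ^ k)%N in
  let D := diag_mx Dv in
  let Dbar := (opnorm D)^-1 *: D in
  let de := frob D ^+ 2 / opnorm D ^+ 2 in
  radprob R (fun e : {ffun 'I_n -> bool} =>
    (\big[Order.max/0]_(j < n)
        rnorm (row j (@walsh_hadamard R k *m diag_mx (@radvec R n e) *m U *m Dbar)))
    >= Num.sqrt (de / n%:R) + Num.sqrt (8 * ln (n%:R / delta) / n%:R))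
  <= delta.
Proof.
move=> _ _ _ _ _ UU _ Dv_ge0 _ /andP[delta_gt0 delta_lt1]; cbv zeta.
set n := (2 ^ k)%N; set D := diag_mx Dv; set Dbar := _ *: D.
set L := ln (n%:R / delta); set M := U *m Dbar.
have n_gt0 : (0 < n)%N by rewrite expn_gt0.
have L_gt0 : 0 < L.
  by rewrite ln_gt0 // ltr_pdivlMr // mul1r (lt_le_trans delta_lt1) // ler1n.
have L8_ge0 : 0 <= 8 * L by rewrite mulr_ge0 ?ltW.
have t_gt0 : 0 < Num.sqrt (8 * L) by rewrite sqrtr_gt0 mulr_gt0.
have contract y : vdot (M *m y) (M *m y) <= vdot y y.
  by rewrite -mulmxA vdot_mul_orthonormal //; apply: vdot_normalized_diag_le.
have -> : frob D ^+ 2 / opnorm D ^+ 2 = frob M ^+ 2.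
  by rewrite frob_mul_orthonormal // frobZ exprVn mulrC.
rewrite -[8 * L](sqr_sqrtr L8_ge0) !sqrtr_sqr_div ?frob_ge0 ?sqrtr_ge0 ?ler0n //.
rewrite -mulrDl; apply: le_trans (radprob_bigmax_ge_le _ _) _.
  by rewrite divr_gt0 ?sqrtr_gt0 ?ltr0n // ltr_pwDr ?frob_ge0.
under eq_bigr => j _ do under eq_radprob => e do rewrite -mulmxA.
apply: le_trans (ler_sum _ (fun j _ =>
  radprob_row_signed_mx_ge_le j (@walsh_hadamard_sqr R k) contract t_gt0)) _.
rewrite sumr_const card_ord sqr_sqrtr // [8 * L]mulrC mulfK ?pnatr_eq0 //.
rewrite expRN /L lnK ?posrE ?divr_gt0 ?ltr0n // invf_div.
by rewrite -[_ *+ _]mulr_natr divfK // pnatr_eq0 -lt0n.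
Qed.
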